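(* The energy spectral density $S_\Omega(z)=\sum_{l=-\infty}^{\infty}r(l)z^{-l}$ of the channel uncertainty satisfies $$S_\Omega(z)=\frac12\sum_{i_1,i_2=0}^{\bar\tau}\big(\alpha_{i_1}z^{i_1}-\alpha_{i_2}z^{i_2}\big)\big(\alpha_{i_1}z^{-i_1}-\alpha_{i_2}z^{-i_2}\big)p_{i_1}p_{i_2}.$$
   Context: Fix an integer $\bar\tau\ge1$, let $\mathcal{D}=\{0,\dots,\bar\tau\}$, and fix real weights $\alpha_0,\dots,\alpha_{\bar\tau}$. Let $\{\tau_n\}$ be i.i.d. $\mathcal{D}$-valued random variables with $\Pr\{\tau_n=i\}=p_i$, where $\sum_ip_i=1$. Let $\delta$ be the Kronecker delta. Define $\omega(k,n)=\alpha_i[\delta(\tau_n-i)-p_i]$ if $k=n+i$ with $i\in\mathcal{D}$, and $\omega(k,n)=0$ otherwise. For a fixed index $n$, define the autocorrelation $$r(l)=\mathbb{E}\Big\{\sum_{k=-\infty}^{\infty}\omega(k,n)\omega(k+l,n)\Big\},\qquad l\in\mathbb{Z}.$$ It does not depend on $n$. *)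

From HB Require Import structures.
From mathcomp Require Import all_boot all_order all_algebra.
From mathcomp Require Import boolp classical_sets.
From mathcomp Require Import complex.
Set Implicit Arguments. Unset Strict Implicit. Unset Printing Implicit Defensive.
Import Order.TTheory GRing.Theory Num.Theory.
Local Open Scope ring_scope.

Definition symsum (V : nmodType) (f : int -> V) (N : nat) : V :=
  \sum_(0 <= j < (2 * N).+1) f (j%:Z - N%:Z).

(* Bilateral sum \sum_{k=-oo}^{oo} f k, defined as the eventual value of the
   symmetric partial sums (for finitely supported f, as used here, these are
   eventually constant and equal to the genuine sum; default 0 otherwise). *)
Definition bisum (V : nmodType) (f : int -> V) : V :=
  xget 0 [set s | exists N0 : nat, forall N : nat, (N0 <= N)%N -> symsum f N = s].

(* omega(k,n) = alpha_i [delta(tau_n - i) - p_i] if k = n + i with i in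
   D = {0,...,taubar}, and 0 otherwise; [tau] is the value of tau_n. *)
Definition omega (R : pzRingType) (taubar : nat) (alpha p : nat -> R)
    (tau : nat) (k n : int) : R :=
  let d := k - n in
  if (0 <= d) && (d <= taubar%:Z) then
    alpha `|d|%N * (((tau == `|d|%N) : nat)%:R - p `|d|%N)
  else 0.

(* Expectation of g(tau_n) where tau_n takes value i in D with probability p_i. *)
Definition expect (R : pzRingType) (taubar : nat) (p : nat -> R)
    (g : nat -> R) : R :=
  \sum_(0 <= i < taubar.+1) p i * g i.

Definition autocorr (R : pzRingType) (taubar : nat) (alpha p : nat -> R)
    (n l : int) : R :=
  expect taubar p
    (fun tau => bisum (fun k => omega taubar alpha p tau k n *
                                omega taubar alpha p tau (k + l) n)).

Definition esd (R : rcfType) (taubar : nat) (alpha p : nat -> R) (n : int)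
    (z : R[i]) : R[i] :=
  bisum (fun l => ((autocorr taubar alpha p n l)%:C)%C * z ^ (- l)).

From HB Require Import structures.
From mathcomp Require Import all_boot all_order all_algebra.
From mathcomp Require Import boolp classical_sets.
From mathcomp Require Import complex zify ring.
Set Implicit Arguments. Unset Strict Implicit. Unset Printing Implicit Defensive.
Import Order.TTheory GRing.Theory Num.Theory.
Local Open Scope ring_scope.

(* For a fixed value tau of tau_n, omega(., n) is supported on n + D with
   omega(n + i, n) = c_i(tau) := alpha_i [delta(tau - i) - p_i], so the inner
   sum in r(l) is the sum of c_i c_j over the pairs (i, j) with j - i = l, and
   S(z) = sum_(i,j) E[c_i c_j] z^(i - j).  The c_i are centred indicators:
   E[c_i c_j] = alpha_i alpha_j (delta_ij p_i - p_i p_j).  Expanding the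
   product in the claimed formula and symmetrizing in (i1, i2) gives twice
   this double sum, using sum_i p_i = 1. *)

Lemma bisum_eventually (V : nmodType) (f : int -> V) (s : V) (N0 : nat) :
  (forall N, (N0 <= N)%N -> symsum f N = s) -> bisum f = s.
Proof.
move=> fE; apply: xget_unique; first by exists N0.
by move=> y [N1 f1E]; rewrite -(f1E (maxn N0 N1)) ?leq_maxr // fE ?leq_maxl.
Qed.

Lemma symsum_indicator (V : nmodType) (c : int) (v : V) (N : nat) :
  (`|c|%N <= N)%N -> symsum (fun k => v *+ (k == c)) N = v.
Proof.
move=> cN; rewrite /symsum.
have c_in : absz (c + N%:Z) \in index_iota 0 (2 * N).+1 by rewrite mem_iota; lia.
rewrite (bigD1_seq _ c_in) ?iota_uniq //= big1 => [|j jc].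
  by rewrite addr0 (_ : _ - _ == c) //; apply/eqP; lia.
by rewrite (_ : _ - _ == c = false) //; apply: contraNF jc => /eqP <-; lia.
Qed.

Lemma bisum_sum_indicator (V : nmodType) (I : eqType) (r : seq I)
    (c : I -> int) (v : I -> V) :
  bisum (fun k => \sum_(x <- r) v x *+ (k == c x)) = \sum_(x <- r) v x.
Proof.
apply: (bisum_eventually (N0 := \max_(x <- r) `|c x|%N)) => N rN.
rewrite /symsum exchange_big /=; apply: eq_big_seq => x xr.
by apply: symsum_indicator; exact: leq_trans (leq_bigmax_seq _ xr _) rN.
Qed.

Lemma bisum_sum2_indicator (V : nmodType) (I J : eqType) (r : seq I)
    (s : seq J) (c : I -> J -> int) (v : I -> J -> V) :
  bisum (fun k => \sum_(x <- r) \sum_(y <- s) v x y *+ (k == c x y)) =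
    \sum_(x <- r) \sum_(y <- s) v x y.
Proof.
rewrite -(big_allpairs (F := fun xy => v xy.1 xy.2)).
rewrite -(bisum_sum_indicator _ (fun xy => c xy.1 xy.2)).
by congr bisum; apply: funext => k; rewrite big_allpairs.
Qed.

Definition omega_tap (R : pzRingType) (alpha p : nat -> R) (tau i : nat) : R :=
  alpha i * (((tau == i) : nat)%:R - p i).

Lemma omega_sum_tap (R : pzRingType) (T : nat) (alpha p : nat -> R)
    (tau : nat) (k n : int) :
  omega T alpha p tau k n =
    \sum_(0 <= i < T.+1) omega_tap alpha p tau i *+ (k == n + i%:Z).
Proof.
rewrite /omega; case: ifP => [/andP [d_ge0 d_leT] | d_out].
  have d_in : absz (k - n) \in index_iota 0 T.+1 by rewrite mem_iota; lia.
  rewrite (bigD1_seq _ d_in) ?iota_uniq //= big1 => [|j jd].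
    by rewrite addr0 (_ : k == _) //; apply/eqP; lia.
  by rewrite (_ : k == _ = false) //; apply: contraNF jd => /eqP ->; lia.
rewrite big1_seq // => j /andP [_]; rewrite mem_iota => j_le.
by rewrite (_ : k == _ = false) //; apply: contraFF d_out => /eqP ->; lia.
Qed.

Lemma bisum_omega_mul_shift (R : pzRingType) (T : nat) (alpha p : nat -> R)
    (tau : nat) (n l : int) :
  bisum (fun k => omega T alpha p tau k n * omega T alpha p tau (k + l) n) =
    \sum_(0 <= i < T.+1) \sum_(0 <= j < T.+1)
      omega_tap alpha p tau i * omega_tap alpha p tau j *+ (l == j%:Z - i%:Z).
Proof.
rewrite -[RHS](bisum_sum_indicator _ (fun i => n + i%:Z)).
congr bisum; apply: funext => k; rewrite !omega_sum_tap mulr_suml.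
apply: eq_bigr => i _; case: eqVneq => [->|_]; last by rewrite mulr0n mul0r.
rewrite !mulr1n mulr_sumr; apply: eq_bigr => j _.
have -> : (n + i%:Z + l == n + j%:Z) = (l == j%:Z - i%:Z) by apply/eqP/eqP; lia.
by rewrite mulrnAr.
Qed.

Lemma expect_indicator (R : pzRingType) (T : nat) (p : nat -> R) (i : nat) :
  (i <= T)%N -> expect T p (fun t => ((t == i) : nat)%:R) = p i.
Proof.
move=> iT; have i_in : i \in index_iota 0 T.+1 by rewrite mem_iota.
rewrite /expect (bigD1_seq _ i_in) ?iota_uniq //= eqxx mulr1 big1 ?addr0 //.
by move=> t /negbTE ->; rewrite mulr0.
Qed.

Lemma expect_omega_tap_mul (R : comPzRingType) (T : nat) (alpha p : nat -> R)
    (i j : nat) :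
  (i <= T)%N -> (j <= T)%N -> \sum_(0 <= t < T.+1) p t = 1 ->
  expect T p (fun t => omega_tap alpha p t i * omega_tap alpha p t j) =
    alpha i * alpha j * (p i *+ (i == j) - p i * p j).
Proof.
move=> iT jT p_sum1; rewrite /expect.
transitivity (\sum_(0 <= t < T.+1) alpha i * alpha j *
  (p t * ((t == i) : nat)%:R * (((i == j) : nat)%:R - p j)
   - p i * (p t * ((t == j) : nat)%:R) + p i * p j * p t)).
  apply: eq_bigr => t _; rewrite /omega_tap.
  by case: (eqVneq t i) => [->|_] /=; ring.
rewrite -mulr_sumr !big_split sumrN /= -mulr_suml -!mulr_sumr p_sum1.
have := expect_indicator p iT; have := expect_indicator p jT; rewrite /expect.
by move=> -> ->; rewrite -mulr_natr; ring.
Qed.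

Lemma autocorr_sum (R : pzRingType) (T : nat) (alpha p : nat -> R) (n l : int) :
  autocorr T alpha p n l =
    \sum_(0 <= i < T.+1) \sum_(0 <= j < T.+1)
      expect T p (fun t => omega_tap alpha p t i * omega_tap alpha p t j)
        *+ (l == j%:Z - i%:Z).
Proof.
rewrite /autocorr /expect; under eq_bigr do rewrite bisum_omega_mul_shift.
under eq_bigr do rewrite mulr_sumr; rewrite exchange_big; apply: eq_bigr => i _.
under eq_bigr do rewrite mulr_sumr; rewrite exchange_big; apply: eq_bigr => j _.
by rewrite -sumrMnl; under eq_bigr do rewrite mulrnAr.
Qed.

Lemma esd_sum (R : rcfType) (T : nat) (alpha p : nat -> R) (n : int) (z : R[i]) :
  esd T alpha p n z =
    \sum_(0 <= i < T.+1) \sum_(0 <= j < T.+1)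
      ((expect T p (fun t => omega_tap alpha p t i * omega_tap alpha p t j))%:C)%C
        * z ^ (i%:Z - j%:Z).
Proof.
rewrite -[RHS](bisum_sum2_indicator _ _ (fun i j : nat => j%:Z - i%:Z)) /esd.
congr bisum; apply: funext => l; rewrite autocorr_sum rmorph_sum mulr_suml.
apply: eq_bigr => i _; rewrite rmorph_sum mulr_suml; apply: eq_bigr => j _.
by rewrite rmorphMn mulrnAl; case: eqVneq => [->|]; rewrite ?opprB.
Qed.

Lemma sum_pairs_symmetrize (V : nmodType) (I : Type) (r : seq I)
    (G : I -> I -> V) :
  \sum_(i <- r) \sum_(j <- r) (G i j + G j i) =
    (\sum_(i <- r) \sum_(j <- r) G i j) *+ 2.
Proof.
under eq_bigr do rewrite big_split; rewrite big_split /=.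
by rewrite [X in _ + X]exchange_big mulr2n.
Qed.

Lemma sum_pair_diffs_cov (F : comPzRingType) (I : eqType) (r : seq I)
    (a P w v : I -> F) :
  uniq r -> \sum_(i <- r) P i = 1 ->
  \sum_(i <- r) \sum_(j <- r)
    (a i * w i - a j * w j) * (a i * v i - a j * v j) * P i * P j =
  (\sum_(i <- r) \sum_(j <- r)
    a i * a j * (P i *+ (i == j) - P i * P j) * (w i * v j)) *+ 2.
Proof.
move=> r_uniq P_sum1.
pose X i j := a i * a j * (w i * v j) * P i * P j.
pose G i j := a i * a i * (w i * v i) * P i * P j - X i j.
transitivity (\sum_(i <- r) \sum_(j <- r) (G i j + G j i)).
  by apply: eq_bigr => i _; apply: eq_bigr => j _; rewrite /G /X; ring.
rewrite sum_pairs_symmetrize; congr (_ *+ 2); apply: eq_big_seq => i ir.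
have diag : \sum_(j <- r) a i * a j * (w i * v j) * P i *+ (i == j) =
    a i * a i * (w i * v i) * P i.
  rewrite (bigD1_seq _ ir r_uniq) /= eqxx big1 ?addr0 // => j ji.
  by rewrite eq_sym (negbTE ji).
transitivity (\sum_(j <- r) a i * a j * (w i * v j) * P i *+ (i == j) -
    \sum_(j <- r) X i j).
  by rewrite diag /G sumrB -mulr_sumr P_sum1 mulr1.
by rewrite -sumrB; apply: eq_bigr => j _; rewrite /X; ring.
Qed.

Theorem lemma3p2 (R : rcfType) (taubar : nat) (alpha p : nat -> R) (n : int)
    (z : R[i]) :
  (1 <= taubar)%N ->
  (forall i : nat, (i <= taubar)%N -> 0 <= p i) ->
  \sum_(0 <= i < taubar.+1) p i = 1 ->
  z != 0 ->
  esd taubar alpha p n z =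
    2^-1 * \sum_(0 <= i1 < taubar.+1) \sum_(0 <= i2 < taubar.+1)
      (((alpha i1)%:C)%C * z ^+ i1 - ((alpha i2)%:C)%C * z ^+ i2) *
      (((alpha i1)%:C)%C * z ^- i1 - ((alpha i2)%:C)%C * z ^- i2) *
      ((p i1)%:C)%C * ((p i2)%:C)%C.
Proof.
move=> _ _ p_sum1 z_neq0.
have pC_sum1 : \sum_(0 <= i < taubar.+1) ((p i)%:C)%C = 1 :> R[i].
  by rewrite -rmorph_sum p_sum1 rmorph1.
rewrite sum_pair_diffs_cov ?iota_uniq // -[X in 2^-1 * X]mulr_natl.
rewrite mulrA mulVf ?pnatr_eq0 // mul1r esd_sum; apply: eq_big_seq => i; rewrite mem_iota => /= i_le.
apply: eq_big_seq => j; rewrite mem_iota => /= j_le.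
rewrite expect_omega_tap_mul // expfzDr // -invr_expz.
by rewrite rmorphM rmorphB rmorphMn !rmorphM.
Qed.
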